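(* Let $\mathcal H=(V,E)$ be a hypergraph with splitting functions and let $R\subseteq V$ satisfy $0<\mathrm{vol}(R)\le\mathrm{vol}(\bar R)$. Let $\varepsilon_0=\mathrm{vol}(R)/\mathrm{vol}(\bar R)$, let $\varepsilon\in[\varepsilon_0,\varepsilon_0+1)$, and set $\mu=\varepsilon-\varepsilon_0\ge0$. Let $S^*$ be a minimizer of $\mathrm{HLC}$ over all subsets of $V$; this is the set returned by Algorithm 1. Then: 1. For every $T\subseteq R$ with $\mathrm{vol}(T)>0$, we have $\mathrm{cond}(S^* )\le\mathrm{cond}(T)$. 2. Let $T\subseteq V$ satisfy $0<\mathrm{vol}(T)\le\mathrm{vol}(\bar T)$, and suppose that for some $\gamma\in(\mu,1)$, $$\frac{\mathrm{vol}(T\cap R)}{\mathrm{vol}(T)}\ge\frac{\mathrm{vol}(R)}{\mathrm{vol}(V)}+\gamma\,\frac{\mathrm{vol}(\bar R)}{\mathrm{vol}(V)}.$$ Then $\mathrm{cond}(S^* )\le\frac{1}{\gamma-\mu}\mathrm{cond}(T)$. In particular, when $\varepsilon=\varepsilon_0$ we get $\mathrm{cond}(S^* )\le\frac1\gamma\mathrm{cond}(T)$.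
   Context: A hypergraph $\mathcal H=(V,E)$ has a finite node set $V$, and each hyperedge $e\in E$ is a subset of $V$. Each hyperedge $e$ carries a splitting function $w_e:2^e\to\mathbb R_{\ge0}$ satisfying $w_e(A)=w_e(e\setminus A)$ for all $A\subseteq e$ and $w_e(\emptyset)=w_e(e)=0$. For $S\subseteq V$, $\mathrm{cut}_{\mathcal H}(S)=\sum_{e\in E}w_e(e\cap S)$. The degree of $v$ is $d_v=\sum_{e\ni v}w_e(\{v\})$, and $\mathrm{vol}(S)=\sum_{v\in S}d_v$. Write $\bar S=V\setminus S$. Hypergraph conductance is $\mathrm{cond}(S)=\mathrm{cut}_{\mathcal H}(S)/\min\{\mathrm{vol}(S),\mathrm{vol}(\bar S)\}$. Define $\Omega_{R,\varepsilon}(S)=\mathrm{vol}(S\cap R)-\varepsilon\,\mathrm{vol}(S\cap\bar R)$. Set $\mathrm{HLC}(S)=\mathrm{cut}_{\mathcal H}(S)/\Omega_{R,\varepsilon}(S)$ if $\Omega_{R,\varepsilon}(S)>0$, and $\mathrm{HLC}(S)=\infty$ otherwise. *)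

From HB Require Import structures.
From mathcomp Require Import all_boot all_order all_algebra.
Set Implicit Arguments. Unset Strict Implicit. Unset Printing Implicit Defensive.
Import Order.TTheory GRing.Theory Num.Theory.
Local Open Scope ring_scope.

Definition is_splitting (R : realFieldType) (V E : finType)
  (edge : E -> {set V}) (w : E -> {set V} -> R) : Prop :=
  forall i : E,
    (forall A : {set V}, A \subset edge i -> 0 <= w i A) /\
    (forall A : {set V}, A \subset edge i -> w i A = w i (edge i :\: A)) /\
    w i set0 = 0 /\ w i (edge i) = 0.

Section HG.
Variables (R : realFieldType) (V E : finType)
  (edge : E -> {set V}) (w : E -> {set V} -> R).

Definition hcut (S : {set V}) : R := \sum_(i : E) w i (edge i :&: S).

Definition hdeg (v : V) : R := \sum_(i : E | v \in edge i) w i [set v].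

Definition hvol (S : {set V}) : R := \sum_(v in S) hdeg v.

(* conductance; (division by 0 is 0 in MathComp, never relevant below) *)
Definition hcond (S : {set V}) : R :=
  hcut S / Num.min (hvol S) (hvol (~: S)).

Definition Omega (Rs : {set V}) (eps : R) (S : {set V}) : R :=
  hvol (S :&: Rs) - eps * hvol (S :&: ~: Rs).

(* HLC with values in R ∪ {∞}; None encodes ∞. *)
Definition HLC (Rs : {set V}) (eps : R) (S : {set V}) : option R :=
  if 0 < Omega Rs eps S then Some (hcut S / Omega Rs eps S) else None.

End HG.

Definition ext_le (R : realFieldType) (x y : option R) : bool :=
  match x, y with
  | _, None => true
  | None, Some _ => false
  | Some a, Some b => a <= b
  end.

From HB Require Import structures.
From mathcomp Require Import all_boot all_order all_algebra.
From mathcomp Require Import ring lra.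
Import Order.TTheory GRing.Theory Num.Theory.
Local Open Scope ring_scope.

(* Once [eps >= eps0 = vol R / vol ~R] (and [eps0 <= 1]), [Omega S] never exceeds
   [min (vol S) (vol ~S)], so [cond S* <= HLC S* <= HLC T] for every [T] with [Omega T > 0].
   For [T] inside [R], [Omega T = vol T] and [HLC T] is just [cond T]; for [T] biased
   towards [R] by [gamma], [Omega T >= (gamma - mu) vol T], whence [HLC T <= cond T / (gamma - mu)]. *)

Section Hypergraph.
Set Implicit Arguments. Unset Strict Implicit.
Variables (R : realFieldType) (V E : finType)
  (edge : E -> {set V}) (w : E -> {set V} -> R).
Hypothesis Hw : is_splitting edge w.

Local Notation vol := (hvol edge w).
Local Notation cut := (hcut edge w).

Lemma hdeg_ge0 v : 0 <= hdeg edge w v.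
Proof.
by apply: sumr_ge0 => i vi; have [w_ge0 _] := Hw i; apply: w_ge0; rewrite sub1set.
Qed.

Lemma hvol_ge0 S : 0 <= vol S.
Proof. by apply: sumr_ge0 => v _; apply: hdeg_ge0. Qed.

Lemma hcut_ge0 S : 0 <= cut S.
Proof. by apply: sumr_ge0 => i _; have [w_ge0 _] := Hw i; apply/w_ge0/subsetIl. Qed.

Lemma hvol_setID (S A : {set V}) : vol S = vol (S :&: A) + vol (S :&: ~: A).
Proof. by rewrite /hvol (big_setID A) /= setDE. Qed.

Lemma hvol_setT (A : {set V}) : vol [set: V] = vol A + vol (~: A).
Proof. by rewrite (hvol_setID _ A) !setTI. Qed.

Lemma hvol_subset (A B : {set V}) : A \subset B -> vol A <= vol B.
Proof. by move=> /setIidPr AB; rewrite (hvol_setID B A) AB lerDl hvol_ge0. Qed.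

Lemma hcond_le_div S c : 0 < c -> c <= Num.min (vol S) (vol (~: S)) ->
  hcond edge w S <= cut S / c.
Proof.
move=> c_gt0 c_le; apply: ler_wpM2l; first exact: hcut_ge0.
by rewrite lef_pV2 ?posrE //; apply: lt_le_trans c_le.
Qed.

Lemma hcondE S : vol S <= vol (~: S) -> hcond edge w S = cut S / vol S.
Proof. by move=> S_le; rewrite /hcond min_l. Qed.

Section Localized.
Variable Rs : {set V}.
Local Notation Om := (Omega edge w Rs).

Lemma Omega_le_hvol eps S : 0 <= eps -> Om eps S <= vol S.
Proof.
move=> eps_ge0; rewrite /Omega (hvol_setID S Rs) lerBlDr -addrA lerDl.
by rewrite addr_ge0 ?mulr_ge0 ?hvol_ge0.
Qed.

Lemma Omega_antitone_eps S eps eps' : eps <= eps' -> Om eps' S <= Om eps S.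
Proof. by move=> le_eps; rewrite lerD2l lerN2 ler_wpM2r ?hvol_ge0. Qed.

Lemma Omega_setC_balanced e0 S : e0 * vol (~: Rs) = vol Rs ->
  Om e0 (~: S) = - Om e0 S.
Proof.
rewrite (hvol_setID (~: Rs) S) (hvol_setID Rs S) /Omega => bal.
rewrite ![_ :&: S]setIC ![_ :&: ~: S]setIC in bal; lra.
Qed.

Lemma Omega_balanced_le_hvolC S e0 : e0 * vol (~: Rs) = vol Rs -> e0 <= 1 ->
  Om e0 S <= vol (~: S).
Proof.
move=> bal e0_le1; rewrite -[S]setCK Omega_setC_balanced // setCK /Omega.
have := hvol_ge0 (~: S :&: Rs); have := hvol_ge0 (~: S :&: ~: Rs).
rewrite (hvol_setID (~: S) Rs); nra.
Qed.

Lemma Omega_le_min eps S :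
  0 < vol (~: Rs) -> vol Rs <= vol (~: Rs) -> vol Rs / vol (~: Rs) <= eps ->
  Om eps S <= Num.min (vol S) (vol (~: S)).
Proof.
move=> Rc_gt0 R_le e0_le; set e0 := vol Rs / vol (~: Rs) in e0_le.
have e0_ge0 : 0 <= e0 by rewrite divr_ge0 ?hvol_ge0.
have e0_le1 : e0 <= 1 by rewrite ler_pdivrMr // mul1r.
have bal : e0 * vol (~: Rs) = vol Rs by rewrite mulfVK ?gt_eqF.
rewrite le_min; apply/andP; split; first exact/Omega_le_hvol/(le_trans e0_ge0).
exact: le_trans (Omega_antitone_eps S e0_le) (Omega_balanced_le_hvolC S bal e0_le1).
Qed.

Lemma Omega_subset eps (T : {set V}) : T \subset Rs -> Om eps T = vol T.
Proof.
move=> TR; rewrite /Omega (setIidPl TR).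
suff -> : T :&: ~: Rs = set0 by rewrite /hvol big_set0 mulr0 subr0.
by apply/setP => x; rewrite !inE andbC; case: (boolP (x \in Rs)) => //= /negP xR;
  apply/negP => /(subsetP TR).
Qed.

Lemma Omega_ge_bias eps g T :
  0 < vol Rs -> 0 < vol (~: Rs) -> vol Rs / vol (~: Rs) <= eps -> 0 <= g ->
  0 < vol T ->
  vol Rs / vol [set: V] + g * (vol (~: Rs) / vol [set: V]) <= vol (T :&: Rs) / vol T ->
  (g - (eps - vol Rs / vol (~: Rs))) * vol T <= Om eps T.
Proof.
move=> R_gt0 Rc_gt0 e0_le g_ge0 T_gt0.
rewrite (hvol_setID T Rs) in T_gt0 *; rewrite /Omega (hvol_setT Rs).
set a := vol (T :&: Rs) in T_gt0 *; set b := vol (T :&: ~: Rs) in T_gt0 *.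
set r := vol Rs in R_gt0 e0_le *; set rc := vol (~: Rs) in Rc_gt0 e0_le *.
set e0 := r / rc in e0_le *.
have e0_ge0 : 0 <= e0 by rewrite divr_ge0 // ltW.
set X := (r + g * rc) / (r + rc).
have rrc_gt0 : 0 < r + rc by lra.
have -> : r / (r + rc) + g * (rc / (r + rc)) = X by rewrite /X; field; rewrite gt_eqF.
move=> bias; have a_ge : X * (a + b) <= a by rewrite -ler_pdivlMr.
have X_ge0 : 0 <= X by rewrite divr_ge0 //; nra.
(* The baseline [vol Rs / vol V] of the bias condition is calibrated exactly for this identity. *)
have XE : (1 + e0) * X = e0 + g.
  by rewrite /e0 /X; field; rewrite !gt_eqF ?rrc_gt0.
have h1 : 0 <= (1 + eps) * (a - X * (a + b)) by apply: mulr_ge0; lra.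
have h2 : 0 <= (eps - e0) * X * (a + b) by apply: mulr_ge0; [apply: mulr_ge0|]; lra.
nra.
Qed.

Variables (eps : R) (Sstar : {set V}).
Hypothesis Sstar_min : forall S, ext_le (HLC edge w Rs eps Sstar) (HLC edge w Rs eps S).

Lemma HLC_argmin_le T : 0 < Om eps T ->
  0 < Om eps Sstar /\ cut Sstar / Om eps Sstar <= cut T / Om eps T.
Proof.
move=> T_gt0; have := Sstar_min T; rewrite /HLC T_gt0.
by case: ifP.
Qed.

Hypotheses (Rc_gt0 : 0 < vol (~: Rs)) (R_le : vol Rs <= vol (~: Rs))
  (e0_le : vol Rs / vol (~: Rs) <= eps).

Lemma hcond_argmin_le T : 0 < Om eps T -> hcond edge w Sstar <= cut T / Om eps T.
Proof.
move=> /HLC_argmin_le [Sstar_gt0 Sstar_le]; apply: le_trans Sstar_le.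
exact/hcond_le_div/Omega_le_min.
Qed.

Lemma hcond_argmin_le_subset (T : {set V}) : T \subset Rs -> 0 < vol T ->
  hcond edge w Sstar <= hcond edge w T.
Proof.
move=> TR T_gt0; have OmT := Omega_subset eps TR.
have T_le : vol T <= vol (~: T).
  apply: le_trans (hvol_subset TR) (le_trans R_le (hvol_subset _)).
  by rewrite setCS.
by rewrite (hcondE T_le) -OmT hcond_argmin_le ?OmT.
Qed.

Lemma hcond_argmin_le_biased T g :
  0 < vol Rs -> 0 < vol T -> vol T <= vol (~: T) ->
  eps - vol Rs / vol (~: Rs) < g ->
  vol Rs / vol [set: V] + g * (vol (~: Rs) / vol [set: V]) <= vol (T :&: Rs) / vol T ->
  hcond edge w Sstar <= (g - (eps - vol Rs / vol (~: Rs)))^-1 * hcond edge w T.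
Proof.
move=> R_gt0 T_gt0 T_le; set k := g - _ => mu_lt bias.
have mu_ge0 : 0 <= eps - vol Rs / vol (~: Rs) by rewrite subr_ge0.
have g_ge0 : 0 <= g by apply: le_trans mu_ge0 (ltW mu_lt).
have Om_ge := Omega_ge_bias R_gt0 Rc_gt0 e0_le g_ge0 T_gt0 bias.
have kT_gt0 : 0 < k * vol T by rewrite mulr_gt0 // subr_gt0.
apply: le_trans (hcond_argmin_le (lt_le_trans kT_gt0 Om_ge)) _.
rewrite (hcondE T_le) mulrCA -invfM; apply: ler_wpM2l; first exact: hcut_ge0.
by rewrite lef_pV2 ?posrE // (lt_le_trans kT_gt0).
Qed.

End Localized.
End Hypergraph.

Theorem theorem4 (R : realFieldType) (V E : finType)
  (edge : E -> {set V}) (w : E -> {set V} -> R)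
  (Hw : is_splitting edge w)
  (Rs : {set V})
  (HR0 : 0 < hvol edge w Rs)
  (HRle : hvol edge w Rs <= hvol edge w (~: Rs))
  (eps : R)
  (Heps0 : hvol edge w Rs / hvol edge w (~: Rs) <= eps)
  (Heps1 : eps < hvol edge w Rs / hvol edge w (~: Rs) + 1)
  (Sstar : {set V})
  (Hmin : forall S : {set V},
      ext_le (HLC edge w Rs eps Sstar) (HLC edge w Rs eps S)) :
  let eps0 := hvol edge w Rs / hvol edge w (~: Rs) in
  let mu := eps - eps0 in
  (forall T : {set V}, T \subset Rs -> 0 < hvol edge w T ->
      hcond edge w Sstar <= hcond edge w T) /\
  (forall (T : {set V}) (gamma : R),
      0 < hvol edge w T -> hvol edge w T <= hvol edge w (~: T) ->
      mu < gamma -> gamma < 1 ->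
      hvol edge w (T :&: Rs) / hvol edge w T >=
        hvol edge w Rs / hvol edge w [set: V]
        + gamma * (hvol edge w (~: Rs) / hvol edge w [set: V]) ->
      hcond edge w Sstar <= (gamma - mu)^-1 * hcond edge w T /\
      (eps = eps0 -> hcond edge w Sstar <= gamma^-1 * hcond edge w T)).
Proof.
move=> eps0 mu; have Rc_gt0 := lt_le_trans HR0 HRle.
split; first exact: (hcond_argmin_le_subset Hw Hmin Rc_gt0 HRle Heps0).
move=> T g T_gt0 T_le mu_lt _ bias.
have biased := hcond_argmin_le_biased Hw Hmin Rc_gt0 HRle Heps0 HR0 T_gt0 T_le mu_lt bias.
split=> // eps_eq; move: biased.
by rewrite /mu eps_eq subrr subr0.
Qed.
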